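(* Assume $C\succ 0$. Let $X\succ 0$ be linearly feasible, i.e. $\mathcal{A}\,\mathrm{vec}(X)=b$, and suppose that $X$ is an equilibrium of the first-ansatz dynamics, i.e. $$v_1(X):=G\mathcal{A}^T(\mathcal{A}G\mathcal{A}^T)^\dagger\mathcal{A}\,\mathrm{vec}(X) - \mathrm{vec}(X) = 0,\qquad G=\tfrac12\bigl(C^{-1}\otimes X + X\otimes C^{-1}\bigr).$$ Then $X$ is an optimal solution of the SDP $\min\{\mathrm{tr}(CX): \mathrm{tr}(A_\ell X)=b_\ell\ \forall\ell\in[m],\ X\succeq 0\}$.
   Context: $C,A_1,\dots,A_m$ are symmetric $n\times n$ matrices and $b\in\mathbb{R}^m$. For an $n\times n$ matrix $M$, $\mathrm{vec}(M)\in\mathbb{R}^{n^2}$ is obtained by stacking the columns of $M$; $\otimes$ is the Kronecker product, with $\mathrm{vec}(ABC)=(C^T\otimes A)\mathrm{vec}(B)$ (so $G\,\mathrm{vec}(C)=\mathrm{vec}(X)$). $\mathcal{A}$ is the $m\times n^2$ matrix whose $\ell$-th row is $\mathrm{vec}(A_\ell)^T$. $\dagger$ is the Moore–Penrose pseudo-inverse. *)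

From mathcomp Require Import all_boot all_order all_algebra.
From mathcomp Require Import reals.
Set Implicit Arguments. Unset Strict Implicit. Unset Printing Implicit Defensive.
Import Order.TTheory GRing.Theory Num.Theory.
Local Open Scope ring_scope.

Section Defs.
Variable R : realType.

(* Decode an index of 'I_(p*q) into the pair (i, j) with mxvec_index i j = k. *)
Definition mxunindex (p q : nat) (k : 'I_(p * q)) : 'I_p * 'I_q :=
  enum_val (cast_ord (esym (mxvec_cast p q)) k).

(* vec M : column-stacking of M; (vec M) at index mxvec_index j i equals M i j,
   i.e. the entries of column j occupy the j-th block. *)
Definition vec (n : nat) (M : 'M[R]_n) : 'cV[R]_(n * n) := (mxvec M^T)^T.

(* Kronecker product compatible with vec: vec(A B C) = (C^T (x) A) vec(B). *)
Definition kron (n : nat) (A B : 'M[R]_n) : 'M[R]_(n * n) :=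
  \matrix_(p, q) (A (mxunindex p).1 (mxunindex q).1 *
                  B (mxunindex p).2 (mxunindex q).2).

Definition calA (m n : nat) (A : 'I_m -> 'M[R]_n) : 'M[R]_(m, n * n) :=
  \matrix_(l, k) vec (A l) k 0.

Definition symmx (n : nat) (M : 'M[R]_n) : Prop := M^T = M.

Definition psd (n : nat) (M : 'M[R]_n) : Prop :=
  symmx M /\ forall v : 'cV[R]_n, 0 <= (v^T *m M *m v) 0 0.
Definition pd (n : nat) (M : 'M[R]_n) : Prop :=
  symmx M /\ forall v : 'cV[R]_n, v != 0 -> 0 < (v^T *m M *m v) 0 0.

(* P is the Moore-Penrose pseudo-inverse of M (the four Penrose conditions,
   which characterize it uniquely). *)
Definition is_pinv (p q : nat) (M : 'M[R]_(p, q)) (P : 'M[R]_(q, p)) : Prop :=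
  [/\ M *m P *m M = M, P *m M *m P = P,
      (M *m P)^T = M *m P & (P *m M)^T = P *m M].

Definition Gmat (n : nat) (C X : 'M[R]_n) : 'M[R]_(n * n) :=
  2^-1 *: (kron (invmx C) X + kron X (invmx C)).

Definition sdp_feasible (m n : nat) (A : 'I_m -> 'M[R]_n) (b : 'cV[R]_m)
  (Y : 'M[R]_n) : Prop :=
  psd Y /\ forall l : 'I_m, \tr (A l *m Y) = b l 0.

Definition sdp_optimal (m n : nat) (C : 'M[R]_n) (A : 'I_m -> 'M[R]_n)
  (b : 'cV[R]_m) (X : 'M[R]_n) : Prop :=
  sdp_feasible A b X /\
  forall Y : 'M[R]_n, sdp_feasible A b Y -> \tr (C *m X) <= \tr (C *m Y).

End Defs.

(* An equilibrium X satisfies G vec(S) = vec(X) for the dual matrix S = sum_l y_l A_l with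
   y = P A vec(X), i.e. X = (X S C^-1 + C^-1 S X)/2.  Hence Z = C - S solves the homogeneous
   Lyapunov-type equation X Z C^-1 + C^-1 Z X = 0.  Multiplying by Z and taking traces gives
   tr(X (Z C^-1 Z)) = 0 with both factors positive semidefinite, which forces Z C^-1 Z = 0 and
   then Z = 0.  So C = sum_l y_l A_l, and tr(C Y) = y^T b is the same for every feasible Y. *)
From mathcomp Require Import all_boot all_order all_algebra.
From mathcomp Require Import reals.
From mathcomp Require Import ring lra.
Set Implicit Arguments. Unset Strict Implicit. Unset Printing Implicit Defensive.
Import Order.TTheory GRing.Theory Num.Theory.
Local Open Scope ring_scope.

Section Vectorization.
Variables (R : realType) (n : nat).
Implicit Types M N : 'M[R]_n.

Lemma mxunindexE (i j : 'I_n) : mxunindex (mxvec_index i j) = (i, j).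
Proof. by rewrite /mxunindex /mxvec_index cast_ordK enum_rankK. Qed.

Lemma vecE M (i j : 'I_n) : vec M (mxvec_index i j) 0 = M j i.
Proof. by rewrite /vec mxE mxvecE mxE. Qed.

Lemma vecD M N : vec (M + N) = vec M + vec N.
Proof. by rewrite /vec !linearD. Qed.

Lemma vecZ t M : vec (t *: M) = t *: vec M.
Proof. by rewrite /vec !linearZ. Qed.

Lemma vec_inj : injective (@vec R n).
Proof. by move=> M N eqMN; apply/matrixP => i j; rewrite -!vecE eqMN. Qed.

Lemma sum_mxvec_index (F : 'I_(n * n) -> R) :
  \sum_k F k = \sum_i \sum_j F (mxvec_index i j).
Proof.
rewrite pair_bigA /= (reindex (uncurry (@mxvec_index n n))) //=.
  by apply: eq_bigr => -[i j].
exact: curry_mxvec_bij.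
Qed.

Lemma kronE M N (i j a b : 'I_n) :
  kron M N (mxvec_index i j) (mxvec_index a b) = M i a * N j b.
Proof. by rewrite /kron mxE !mxunindexE. Qed.

Lemma mulmx_kron_vec M N Y : kron M N *m vec Y = vec (N *m Y *m M^T).
Proof.
apply/matrixP => k z; rewrite ord1; case/mxvec_indexP: k => i j.
rewrite vecE !mxE sum_mxvec_index.
under eq_bigr => a _ do under eq_bigr => b _ do rewrite kronE vecE.
apply: eq_bigr => a _; rewrite mxE mulr_suml.
by apply: eq_bigr => b _; rewrite !mxE; ring.
Qed.

Lemma trmx_calA_mul m (A : 'I_m -> 'M[R]_n) (y : 'cV[R]_m) :
  (calA A)^T *m y = vec (\sum_l y l 0 *: A l).
Proof.
apply/matrixP => k z; rewrite ord1; case/mxvec_indexP: k => i j.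
rewrite vecE !mxE summxE; apply: eq_bigr => l _.
by rewrite !mxE mxvecE mxE mulrC.
Qed.

Lemma calA_mul_vec m (A : 'I_m -> 'M[R]_n) Y l :
  symmx (A l) -> (calA A *m vec Y) l 0 = \tr (A l *m Y).
Proof.
move=> symAl; rewrite mxE sum_mxvec_index /mxtrace.
apply: eq_bigr => i _; rewrite mxE; apply: eq_bigr => j _.
by rewrite !mxE symAl !mxvecE mxE.
Qed.

Lemma Gmat_mul_vec (C X S : 'M[R]_n) : symmx C -> symmx X ->
  Gmat C X *m vec S = vec (2^-1 *: (X *m S *m invmx C + invmx C *m S *m X)).
Proof.
move=> symC symX; rewrite /Gmat -scalemxAl mulmxDl !mulmx_kron_vec vecZ vecD.
by rewrite trmx_inv symC symX.
Qed.

End Vectorization.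

Section SemidefiniteMatrices.
Variables (R : realType) (n : nat).
Implicit Types Q T : 'M[R]_n.
Implicit Types u v : 'cV[R]_n.

Definition form Q u v : R := (u^T *m Q *m v) 0 0.

Lemma formDl Q u1 u2 v : form Q (u1 + u2) v = form Q u1 v + form Q u2 v.
Proof. by rewrite /form linearD /= !mulmxDl mxE. Qed.

Lemma formDr Q u v1 v2 : form Q u (v1 + v2) = form Q u v1 + form Q u v2.
Proof. by rewrite /form !mulmxDr mxE. Qed.

Lemma formZl Q t u v : form Q (t *: u) v = t * form Q u v.
Proof. by rewrite /form linearZ /= -!scalemxAl mxE. Qed.

Lemma formZr Q t u v : form Q u (t *: v) = t * form Q u v.
Proof. by rewrite /form -!scalemxAr mxE. Qed.

Lemma formBm Q1 Q2 u v : form (Q1 - Q2) u v = form Q1 u v - form Q2 u v.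
Proof. by rewrite /form mulmxBr mulmxBl [LHS]mxE [X in _ + X]mxE. Qed.

Lemma formZm t Q u v : form (t *: Q) u v = t * form Q u v.
Proof. by rewrite /form -scalemxAr -scalemxAl mxE. Qed.

Lemma formC Q u v : symmx Q -> form Q u v = form Q v u.
Proof.
move=> symQ; rewrite /form.
transitivity ((u^T *m Q *m v)^T 0 0); first by rewrite [RHS]mxE.
by rewrite !trmx_mul trmxK symQ mulmxA.
Qed.

Lemma form_rank1 Q u v : symmx Q -> form (Q *m u *m (Q *m u)^T) v v = form Q v u ^+ 2.
Proof.
move=> symQ; rewrite /form trmx_mul symQ !mulmxA -[_ *m u^T *m Q]mulmxA -mulmxA.
by rewrite [LHS]mxE big_ord1 -!/(form _ _ _) (formC u v symQ) expr2.
Qed.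

Lemma form_delta_l Q (i : 'I_n) v : form Q (delta_mx i 0) v = (Q *m v) i 0.
Proof. by rewrite /form trmx_delta -mulmxA -rowE mxE. Qed.

Lemma form_delta Q (i j : 'I_n) : form Q (delta_mx i 0) (delta_mx j 0) = Q i j.
Proof. by rewrite form_delta_l -colE mxE. Qed.

Lemma symmxE Q (i j : 'I_n) : symmx Q -> Q j i = Q i j.
Proof. by move=> symQ; rewrite -[in LHS]symQ mxE. Qed.

(* If u^T Q v were nonzero, moving from u along v would make the form negative. *)
Lemma psd_form_eq0 Q v : psd Q -> form Q v v = 0 -> Q *m v = 0.
Proof.
move=> [symQ Qge0] Qv0; apply/matrixP => i z; rewrite ord1 [RHS]mxE -form_delta_l.
set u := delta_mx i 0; apply/eqP/negPn/negP => uv_neq0.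
set t := - (form Q u u + 1) / (2 * form Q u v).
have := Qge0 (u + t *: v); rewrite -/(form _ _ _).
rewrite !(formDl, formDr, formZl, formZr) Qv0 (formC v u symQ) !mulr0 addr0.
have -> : t * form Q u v = - (form Q u u + 1) / 2 by rewrite /t; field.
lra.
Qed.

Lemma psd_tr_mul_eq0 p Q (N : 'M[R]_(n, p)) :
  psd Q -> N^T *m Q *m N = 0 -> Q *m N = 0.
Proof.
move=> psdQ NQN0; apply/matrixP => i j.
have : form Q (col j N) (col j N) = 0.
  by rewrite /form tr_col -!row_mul colE mulmxA -colE NQN0 !mxE.
move=> /(psd_form_eq0 psdQ) /matrixP /(_ i 0).
by rewrite colE mulmxA -colE !mxE.
Qed.

(* Symmetric Gaussian elimination (Schur complement) at pivot k; it clears row and column k. *)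
Definition pivot Q (k : 'I_n) : 'M[R]_n :=
  Q - (Q k k)^-1 *: (Q *m delta_mx k (0 : 'I_1) *m (Q *m delta_mx k 0)^T).

Lemma pivotE Q k i j : pivot Q k i j = Q i j - (Q k k)^-1 * (Q i k * Q j k).
Proof. by rewrite /pivot -colE !mxE big_ord1 !mxE. Qed.

Lemma psd_pivot Q k : psd Q -> 0 < Q k k -> psd (pivot Q k).
Proof.
move=> [symQ Qge0] Qkk_gt0; split.
  by rewrite /symmx /pivot linearB /= linearZ /= trmx_mul trmxK symQ.
move=> v; set e : 'cV[R]_n := delta_mx k 0; set s := form Q v e.
have := Qge0 (v + (- s / Q k k) *: e); rewrite -!/(form _ _ _).
rewrite !(formDl, formDr, formZl, formZr) (formC e v symQ) /e form_delta -/e -/s.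
rewrite /pivot formBm formZm form_rank1 // -/s.
have Qkk_neq0 : Q k k != 0 by rewrite gt_eqF.
by move=> ge0; apply: le_trans ge0 _; rewrite le_eqVlt; apply/orP; left; apply/eqP; field.
Qed.

Lemma psd_sum_rank1_on (I : {set 'I_n}) Q :
  psd Q -> (forall i j, i \notin I -> Q i j = 0) ->
  exists s : seq 'cV[R]_n, Q = \sum_(w <- s) w *m w^T.
Proof.
have [N] := ubnP #|I|; elim: N I Q => // N IH I Q; rewrite ltnS => cardI psdQ suppQ.
case: (set_0Vmem I) => [I0 | [k kI]].
  by exists [::]; rewrite big_nil; apply/matrixP => i j; rewrite mxE suppQ // I0 inE.
have {cardI} cardIk : (#|I :\ k| < N)%N by rewrite (cardsD1 k I) kI in cardI.
have suppIk Q' : (forall i j, i \notin I -> Q' i j = 0) -> (forall j, Q' k j = 0) ->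
    forall i j, i \notin I :\ k -> Q' i j = 0.
  by move=> suppQ' Q'k0 i j; rewrite in_setD1 negb_and negbK => /orP[/eqP-> | /suppQ'].
have [symQ Qge0] := psdQ.
have := Qge0 (delta_mx k 0); rewrite -/(form _ _ _) form_delta le_eqVlt.
case/orP=> [/eqP/esym Qkk0 | Qkk_gt0].
  apply: (IH (I :\ k)) => //; apply: suppIk => // j.
  have Qe0 : Q *m delta_mx k (0 : 'I_1) = 0 by apply: psd_form_eq0; rewrite ?form_delta.
  by rewrite symmxE // -form_delta form_delta_l Qe0 mxE.
have [s Es] : exists s : seq 'cV[R]_n, pivot Q k = \sum_(w <- s) w *m w^T.
  apply: (IH (I :\ k)); [exact: cardIk | exact: psd_pivot | apply: suppIk => [i j iI | j]].
    by rewrite pivotE !(suppQ i) // mul0r mulr0 subr0.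
  by rewrite pivotE (symmxE k j symQ) mulrA mulVf ?gt_eqF // mul1r subrr.
exists (Num.sqrt (Q k k)^-1 *: (Q *m delta_mx k 0) :: s).
rewrite big_cons -Es /pivot linearZ /= -scalemxAl -scalemxAr scalerA -expr2.
by rewrite sqr_sqrtr ?invr_ge0 ?ltW // addrC subrK.
Qed.

Lemma psd_sum_rank1 Q : psd Q -> exists s : seq 'cV[R]_n, Q = \sum_(w <- s) w *m w^T.
Proof. by move=> psdQ; apply: (psd_sum_rank1_on (I := setT)) => // i j; rewrite inE. Qed.

Lemma psd_mxtrace_mul_eq0 Q T : psd Q -> psd T -> \tr (Q *m T) = 0 -> Q *m T = 0.
Proof.
move=> psdQ [symT Tge0]; have [s ->] := psd_sum_rank1 psdQ.
rewrite mulmx_suml linear_sum /= => tr0.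
have formT0 w : w \in s -> form T w w = 0.
  have : \sum_(w <- s) form T w w = 0.
    rewrite -[RHS]tr0; apply: eq_bigr => v _.
    by rewrite -mulmxA mxtrace_mulC trace_mx11.
  rewrite big_seq => /eqP; rewrite psumr_eq0 => [/allP sum0 ws | v _]; last exact: Tge0.
  exact/eqP/(implyP (sum0 w ws)).
rewrite big_seq big1 // => w /formT0 /(psd_form_eq0 (conj symT Tge0)) Tw0.
by rewrite -mulmxA -[T in w^T *m T]symT -trmx_mul Tw0 linear0 mulmx0.
Qed.

Lemma pd_psd Q : pd Q -> psd Q.
Proof.
move=> [symQ Qgt0]; split=> // v; have [->|/Qgt0/ltW //] := eqVneq v 0.
by rewrite mulmx0 mxE.
Qed.

Lemma pd_unitmx Q : pd Q -> Q \in unitmx.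
Proof.
move=> [symQ Qgt0]; rewrite -row_free_unit -kermx_eq0; apply/eqP/row_matrixP => i.
have uQ0 : row i (kermx Q) *m Q = 0.
  by rewrite -row_mul; move/sub_kermxP: (submx_refl (kermx Q)) => ->; rewrite row0.
rewrite row0; apply/trmx_inj/eqP; rewrite linear0; apply/negPn/negP => /Qgt0.
rewrite trmxK -mulmxA -[Q *m _]trmxK trmx_mul trmxK symQ uQ0 linear0 mulmx0.
by rewrite mxE ltxx.
Qed.

Lemma psd_invmx Q : pd Q -> psd (invmx Q).
Proof.
move=> pdQ; have [symQ Qge0] := pd_psd pdQ.
have symQi : symmx (invmx Q) by rewrite /symmx trmx_inv symQ.
split=> // v; have := Qge0 (invmx Q *m v).
rewrite trmx_mul symQi !mulmxA -[_ *m invmx Q *m Q]mulmxA mulVmx ?pd_unitmx //.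
by rewrite mulmx1.
Qed.

Lemma psd_mulmx_tr p Q (N : 'M[R]_(n, p)) : psd Q -> psd (N^T *m Q *m N).
Proof.
move=> [symQ Qge0]; split=> [|v].
  by rewrite /symmx !trmx_mul trmxK symQ mulmxA.
by have := Qge0 (N *m v); rewrite trmx_mul !mulmxA.
Qed.

(* Multiplying the equation by Z and taking traces yields tr(X (Z C^-1 Z)) = 0. *)
Lemma lyapunov_eq0 (C X Z : 'M[R]_n) : pd C -> pd X -> symmx Z ->
  X *m Z *m invmx C + invmx C *m Z *m X = 0 -> Z = 0.
Proof.
move=> pdC pdX symZ lyapZ.
have tr0 : \tr (X *m (Z^T *m invmx C *m Z)) = 0.
  have : \tr ((X *m Z *m invmx C + invmx C *m Z *m X) *m Z) = 0.
    by rewrite lyapZ mul0mx linear0.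
  have trC : \tr (invmx C *m Z *m X *m Z) = \tr (X *m Z *m invmx C *m Z).
    by rewrite -mulmxA mxtrace_mulC !mulmxA.
  rewrite mulmxDl mxtraceD trC symZ !mulmxA => tr20; lra.
have := psd_mxtrace_mul_eq0 (pd_psd pdX) (psd_mulmx_tr Z (psd_invmx pdC)) tr0.
move=> /(congr1 (mulmx (invmx X))); rewrite mulKmx ?pd_unitmx // mulmx0.
move=> /(psd_tr_mul_eq0 (psd_invmx pdC)) /(congr1 (mulmx C)).
by rewrite mulKVmx ?pd_unitmx // mulmx0.
Qed.

End SemidefiniteMatrices.

Lemma lyapunov_residual (R : realType) (n : nat) (C X S : 'M[R]_n) : C \in unitmx ->
  X = 2^-1 *: (X *m S *m invmx C + invmx C *m S *m X) ->
  X *m (C - S) *m invmx C + invmx C *m (C - S) *m X = 0.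
Proof.
move=> unitC eqX.
have -> : X *m (C - S) *m invmx C = X - X *m S *m invmx C.
  by rewrite mulmxBr mulmxBl -mulmxA mulmxV // mulmx1.
have -> : invmx C *m (C - S) *m X = X - invmx C *m S *m X.
  by rewrite mulmxBr mulVmx // mulmxBl mul1mx.
rewrite addrACA -opprD {1 2}eqX -scalerDl (_ : 2^-1 + 2^-1 = 1 :> R) ?scale1r ?subrr //.
by field.
Qed.

Lemma sdp_optimal_of_span (R : realType) (m n : nat) (C : 'M[R]_n)
    (A : 'I_m -> 'M[R]_n) (b y : 'cV[R]_m) (X : 'M[R]_n) :
  C = \sum_l y l 0 *: A l -> sdp_feasible A b X -> sdp_optimal C A b X.
Proof.
move=> -> feasX; split=> // Y [_ feasY]; case: feasX => _ feasX.
suff trE Z : (forall l, \tr (A l *m Z) = b l 0) ->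
    \tr ((\sum_l y l 0 *: A l) *m Z) = \sum_l y l 0 * b l 0.
  by rewrite trE // trE.
move=> feasZ; rewrite mulmx_suml linear_sum; apply: eq_bigr => l _.
by rewrite -scalemxAl linearZ /= feasZ.
Qed.

Theorem lemma4p4 (R : realType) (m n : nat)
  (C : 'M[R]_n) (A : 'I_m -> 'M[R]_n) (b : 'cV[R]_m) (X : 'M[R]_n)
  (P : 'M[R]_m) :
  symmx C -> (forall l, symmx (A l)) ->
  pd C -> pd X ->
  calA A *m vec X = b ->
  is_pinv (calA A *m Gmat C X *m (calA A)^T) P ->
  Gmat C X *m (calA A)^T *m P *m calA A *m vec X - vec X = 0 ->
  sdp_optimal C A b X.
Proof.
move=> symC symA pdC pdX linfeasX _ equil.
set y := P *m calA A *m vec X; set S := \sum_l y l 0 *: A l.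
have symS : symmx S.
  by rewrite /symmx linear_sum; apply: eq_bigr => l _; rewrite linearZ /= symA.
have GS : Gmat C X *m vec S = vec X.
  by rewrite -trmx_calA_mul /y !mulmxA; apply/eqP; rewrite -subr_eq0 equil.
have lyapCS : X *m (C - S) *m invmx C + invmx C *m (C - S) *m X = 0.
  apply: lyapunov_residual; first exact: pd_unitmx.
  by apply: vec_inj; rewrite -Gmat_mul_vec ?GS //; case: pdX.
have CS : C = S.
  apply/eqP; rewrite -subr_eq0; apply/eqP/(lyapunov_eq0 pdC pdX _ lyapCS).
  by rewrite /symmx linearB /= symC symS.
apply: (sdp_optimal_of_span CS); split; first exact: pd_psd.
by move=> l; rewrite -linfeasX calA_mul_vec.
Qed.
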